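(* Fix weights $w_1,\dots,w_D>0$ and let $\mu_{n,N,w}$ be the Boltzmann probability measure on perfect matchings $\tau$ of the $N$-fold blow-up $\mathbb T(n,\Lambda)_N$, with $\mu_{n,N,w}(\tau)\propto\prod_{e\in\tau}w(e)$, where every lift of an edge of type $e_i$ has weight $w_i$. Let $H(\mu_{n,N,w})=-\sum_\tau\mu_{n,N,w}(\tau)\log\mu_{n,N,w}(\tau)$ be its Shannon entropy. Then $$\lim_{n\to\infty}\lim_{N\to\infty}\frac{1}{Nn^d}\Big[H(\mu_{n,N,w})-n^d\log N!\Big]=\log(w_1+\dots+w_D)-\frac{1}{w_1+\dots+w_D}\sum_{i=1}^D w_i\log w_i .$$
   Context: $\Lambda$ is a bipartite graph embedded in $\mathbb R^d$ of the following form (or a linear image of one): there are vectors $e_1,\dots,e_D\in\mathbb R^d$ spanning $\mathbb R^d$ with $\sum_{i=1}^D e_i=0$ and a vector $v_0$ with $e_i\in v_0+\mathbb Z^d$ for all $i$; the white vertices are $W=\mathbb Z^d$, the black vertices are $B=\mathbb Z^d+v_0$, and each white vertex $w$ is joined by an edge exactly to the black vertices $w+e_1,\dots,w+e_D$; $\Lambda$ is connected. An edge from $w$ to $w+e_i$ is said to be of type $e_i$. The torus $\mathbb T(n,\Lambda)=\Lambda/n\mathbb Z^d$ has $n^d$ white and $n^d$ black vertices. The $N$-fold blow-up $G_N$ of a graph $G$ replaces every vertex by $N$ copies (lifts) and every edge $(u,v)$ by the complete bipartite graph between the lifts of $u$ and the lifts of $v$. *)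

From HB Require Import structures.
From mathcomp Require Import all_boot all_order all_algebra.
From mathcomp Require Import all_classical all_reals all_analysis.
Set Implicit Arguments. Unset Strict Implicit. Unset Printing Implicit Defensive.
Import Order.TTheory GRing.Theory Num.Theory.
Local Open Scope ring_scope.

(* The graph Lambda is encoded by: d, D, v0 : R^d, and integer vectors
   f i = e_i - v0 in Z^d, so that e_i = v0 + f i.
   White vertices are Z^d; a black vertex b in Z^d + v0 is represented by
   b - v0 in Z^d.  White w is joined to black w + e_i, represented by w + f i. *)

Section Lattice.
Variables (R : realType) (d D : nat).

Definition evec (v0 : 'I_d -> R) (f : 'I_D -> 'I_d -> int) (i : 'I_D) (k : 'I_d) : R :=
  v0 k + (f i k)%:~R.

Definition spans_Rd (e : 'I_D -> 'I_d -> R) : Prop :=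
  forall x : 'I_d -> R, exists c : 'I_D -> R,
    forall k, x k = \sum_(i < D) c i * e i k.

Definition sum_zero (e : 'I_D -> 'I_d -> R) : Prop :=
  forall k, \sum_(i < D) e i k = 0.

End Lattice.

(* Vertices of the infinite graph Lambda: (true, x) = white vertex x in Z^d,
   (false, y) = black vertex y + v0. *)
Definition LVert (d : nat) := (bool * {ffun 'I_d -> int})%type.

Definition Ladj (d D : nat) (f : 'I_D -> 'I_d -> int) (u v : LVert d) : Prop :=
  exists i : 'I_D,
    (u.1 = true /\ v.1 = false /\ forall k, v.2 k = u.2 k + f i k) \/
    (v.1 = true /\ u.1 = false /\ forall k, u.2 k = v.2 k + f i k).

Inductive Lreach (d D : nat) (f : 'I_D -> 'I_d -> int) : LVert d -> LVert d -> Prop :=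
  | Lreach_refl u : Lreach f u u
  | Lreach_step u v x : Ladj f u v -> Lreach f v x -> Lreach f u x.

Definition Lconnected (d D : nat) (f : 'I_D -> 'I_d -> int) : Prop :=
  forall u v : LVert d, Lreach f u v.

(* Torus T(m.+1, Lambda) = Lambda / (m.+1) Z^d.  Both white and black vertices
   are indexed by (Z/(m+1)Z)^d. *)
Definition TVert (d m : nat) := {ffun 'I_d -> 'I_m.+1}.

Definition tshift (d D m : nat) (f : 'I_D -> 'I_d -> int) (i : 'I_D) (x : TVert d m)
  : TVert d m := [ffun k => x k + Zp1 *~ f i k].

(* A lift is (vertex, copy index in 'I_N).
   An edge of the blow-up is a white lift a, an edge type i and a black lift
   (tshift i a.1, l').  A perfect matching assigns to every white lift a an
   incident edge (type, black copy), such that every black lift is covered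
   exactly once. *)
Definition Matching (d D m N : nat) :=
  {ffun (TVert d m * 'I_N) -> ('I_D * 'I_N)}.

Definition black_end (d D m N : nat) (f : 'I_D -> 'I_d -> int)
  (M : Matching d D m N) (a : TVert d m * 'I_N) : TVert d m * 'I_N :=
  (tshift f (M a).1 a.1, (M a).2).

Definition perfect (d D m N : nat) (f : 'I_D -> 'I_d -> int) (M : Matching d D m N) : bool :=
  [forall b : TVert d m * 'I_N, #|[set a | black_end f M a == b]| == 1%N].

Section Boltzmann.
Variables (R : realType) (d D : nat) (f : 'I_D -> 'I_d -> int) (w : 'I_D -> R).

Definition mweight (m N : nat) (M : Matching d D m N) : R :=
  \prod_(a : TVert d m * 'I_N) w (M a).1.

Definition partition_fn (m N : nat) : R :=
  \sum_(M : Matching d D m N | perfect f M) mweight M.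

Definition boltzmann (m N : nat) (M : Matching d D m N) : R :=
  mweight M / partition_fn m N.

Definition entropy (m N : nat) : R :=
  - \sum_(M : Matching d D m N | perfect f M)
      boltzmann M * ln (boltzmann M).

Definition normalized_entropy (m N : nat) : R :=
  (entropy m N - ((m.+1) ^ d)%:R * ln (N`!)%:R) / (N * (m.+1) ^ d)%:R.

End Boltzmann.

(* Fix the edge types of all white lifts.  The perfect matchings with these
   types are permuted simply transitively by relabelling the N copies of each
   black vertex, so there are at most N!^V of them, and exactly N!^V when every
   black vertex receives N edges.  Assigning to every white vertex a word of
   types with one common letter profile gives such a balanced assignment, and
   some profile carries a 1/(N+1)^D share of the total weight.  Hence, for any
   weights u, with V = n^d,
     N!^V ((sum_i u_i)^N / (N+1)^D)^V <= Z(u) <= N!^V (sum_i u_i)^(VN),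
   so the free energy (ln Z(w^s) - V ln N!)/(NV) is within D ln(N+1)/N of
   g(s) = ln (sum_i w_i^s).  The entropy is ln Z(w) minus the mean log-weight,
   and convexity of s |-> ln Z(w^s) squeezes the mean log-weight between the
   difference quotients at s = 1 +- h; a second-order bound on g then yields
   the limit g(1) - g'(1) already for each fixed n, with an error
   O(h + ln N / (N h)). *)

From HB Require Import structures.
From mathcomp Require Import all_boot all_order all_algebra all_fingroup.
From mathcomp Require Import all_classical all_reals all_analysis.
From mathcomp Require Import ring lra.
Import Order.TTheory GRing.Theory Num.Theory.
Import numFieldNormedType.Exports.
Set Implicit Arguments.
Unset Strict Implicit.
Unset Printing Implicit Defensive.
Local Open Scope ring_scope.

Section Matchings.
Variables (d D m N : nat) (f : 'I_D -> 'I_d -> int).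
Local Notation lift := (TVert d m * 'I_N)%type.
Local Notation matching := (Matching d D m N).

Lemma perfectP (M : matching) :
  reflect (injective (black_end f M)) (perfect f M).
Proof.
apply: (iffP forallP) => [H a a' E | /injF_bij [g K1 K2] b].
  have /cards1P [x Hx] := H (black_end f M a).
  have : a \in [set a0 | black_end f M a0 == black_end f M a] by rewrite inE.
  have : a' \in [set a0 | black_end f M a0 == black_end f M a] by rewrite inE E.
  by rewrite Hx !inE => /eqP -> /eqP ->.
apply/cards1P; exists (g b); apply/setP => a; rewrite !inE.
by apply/eqP/eqP => [<- | ->]; [rewrite K1 | rewrite K2].
Qed.

Definition edge_types (M : matching) : {ffun lift -> 'I_D} := [ffun a => (M a).1].

Definition relabel (M0 : matching) (pi : {ffun TVert d m -> {perm 'I_N}}) : matching :=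
  [ffun a => ((M0 a).1, pi (tshift f (M0 a).1 a.1) (M0 a).2)].

Lemma edge_types_relabel M0 pi : edge_types (relabel M0 pi) = edge_types M0.
Proof. by apply/ffunP => a; rewrite !ffunE. Qed.

Lemma black_end_relabel M0 pi a :
  black_end f (relabel M0 pi) a =
  ((black_end f M0 a).1, pi (black_end f M0 a).1 (black_end f M0 a).2).
Proof. by rewrite /black_end ffunE. Qed.

Lemma relabel_perfect {M0 : matching} pi : perfect f M0 -> perfect f (relabel M0 pi).
Proof.
move=> /perfectP inj0; apply/perfectP => a a'; rewrite !black_end_relabel.
move: (inj0 a a'); case: (black_end f M0 a) => y k; case: (black_end f M0 a') => y' k'.
by move=> inj [Ey]; rewrite -Ey => /perm_inj Ek; apply: inj; rewrite Ey Ek.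
Qed.

Lemma relabel_inj {M0 : matching} : perfect f M0 -> injective (relabel M0).
Proof.
move=> /perfectP /injF_bij [g K1 K2] pi pi' E.
apply/ffunP => y; apply/permP => k.
have := congr1 (fun M => black_end f M (g (y, k))) E.
by rewrite !black_end_relabel K2 => -[].
Qed.

Lemma relabel_onto {M0 M : matching} : perfect f M0 -> perfect f M ->
  edge_types M = edge_types M0 -> exists pi, M = relabel M0 pi.
Proof.
move=> P0 /perfectP injM E.
have [g K1 K2] := injF_bij (elimT (perfectP M0) P0).
have Et a : (M a).1 = (M0 a).1.
  by have := congr1 (fun T : {ffun lift -> 'I_D} => T a) E; rewrite !ffunE.
have inj y : injective (fun k : 'I_N => (M (g (y, k))).2).
  move=> k k' Ek.
  suff : black_end f M (g (y, k)) = black_end f M (g (y, k')).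
    by move/injM/(congr1 (black_end f M0)); rewrite !K2 => -[].
  rewrite /black_end Ek !Et.
  by have := K2 (y, k); have := K2 (y, k'); rewrite /black_end => -[-> _] [-> _].
exists [ffun y => perm (inj y)]; apply/ffunP => a.
rewrite !ffunE permE.
have -> : (tshift f (M0 a).1 a.1, (M0 a).2) = black_end f M0 a by [].
by rewrite K1 -Et; case: (M a).
Qed.

Lemma card_perfect_types_le (T : {ffun lift -> 'I_D}) :
  (#|[set M : matching | perfect f M & edge_types M == T]| <= N`! ^ #|TVert d m|)%N.
Proof.
have [-> | [M0]] := set_0Vmem [set M : matching | perfect f M & edge_types M == T].
  by rewrite cards0.
rewrite inE => /andP [P0 /eqP T0].
rewrite -card_Sn -card_ffun -cardsT; apply: leq_trans (leq_imset_card (relabel M0) _).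
apply: subset_leq_card; apply/fintype.subsetP => M; rewrite inE => /andP [P /eqP TM].
have [pi ->] := relabel_onto P0 P (etrans TM (esym T0)).
by apply: imset_f; rewrite inE.
Qed.

Definition balanced (T : {ffun lift -> 'I_D}) :=
  forall y, #|[set a : lift | tshift f (T a) a.1 == y]| = N.

Lemma card_perfect_types_ge (T : {ffun lift -> 'I_D}) : balanced T ->
  (N`! ^ #|TVert d m| <= #|[set M : matching | perfect f M & edge_types M == T]|)%N.
Proof.
move=> balT.
pose fibre (a : lift) :=
  enum [set a' : lift | tshift f (T a') a'.1 == tshift f (T a) a.1].
have in_fibre a : a \in fibre a by rewrite mem_enum inE.
have index_lt a : (index a (fibre a) < N)%N.
  by move: (in_fibre a); rewrite -index_mem /fibre -cardE balT.
(* the copy of the black endpoint of [a] is the rank of [a] within its fibre *)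
pose M0 : matching := [ffun a => (T a, insubd a.2 (index a (fibre a)))].
have types0 : edge_types M0 = T by apply/ffunP => a; rewrite !ffunE.
have P0 : perfect f M0.
  apply/perfectP => a a'; rewrite /black_end !ffunE /= => -[E1 E2].
  have := congr1 val E2; rewrite !val_insubd !index_lt => E.
  have Efib : fibre a = fibre a' by rewrite /fibre E1.
  by rewrite -(nth_index a (in_fibre a)) E Efib nth_index.
rewrite -card_Sn -card_ffun -cardsT -(card_imset _ (relabel_inj P0)).
apply: subset_leq_card; apply/fintype.subsetP => M /imsetP [pi _ ->].
by rewrite inE relabel_perfect //= edge_types_relabel types0.
Qed.

End Matchings.

Lemma card_set_sum_nat (T : finType) (P : pred T) :
  #|[set x | P x]| = (\sum_x (P x : nat))%N.
Proof. by rewrite -sum1dep_card big_mkcond; apply: eq_bigr => x _; case: (P x). Qed.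

Section Profiles.
Variables (d D m N : nat) (f : 'I_D -> 'I_d -> int).
Local Notation lift := (TVert d m * 'I_N)%type.
Local Notation word := {ffun 'I_N -> 'I_D}.

Lemma sum_tshift_eq i (y : TVert d m) :
  (\sum_(x : TVert d m) (tshift f i x == y : nat))%N = 1%N.
Proof.
pose x0 : TVert d m := [ffun k => y k - Zp1 *~ f i k].
have -> : y = tshift f i x0 by apply/ffunP => k; rewrite !ffunE subrK.
rewrite (bigD1 x0) //= eqxx big1 // => x nx; apply/eqP; rewrite eqb0.
apply: contra nx => /eqP /ffunP E; apply/eqP/ffunP => k.
by move: (E k); rewrite !ffunE => /addIr.
Qed.

Definition profile (tau : word) : {ffun 'I_D -> 'I_N.+1} :=
  [ffun i => inord #|[set l | tau l == i]|].

Lemma profile_card (tau tau' : word) i : profile tau = profile tau' ->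
  #|[set l | tau l == i]| = #|[set l | tau' l == i]|.
Proof.
move=> /(congr1 (fun c : {ffun 'I_D -> 'I_N.+1} => nat_of_ord (c i))).
have small (t : word) : (#|[set l | t l == i]| < N.+1)%N.
  by rewrite ltnS (leq_trans (max_card _)) // card_ord.
by rewrite !ffunE !inordK.
Qed.

Lemma sum_card_letters (tau : word) : (\sum_i #|[set l | tau l == i]|)%N = N.
Proof.
under eq_bigr do rewrite card_set_sum_nat.
rewrite exchange_big /= -[RHS]card_ord -sum1_card; apply: eq_bigr => l _.
by rewrite (bigD1 (tau l)) //= eqxx big1 // => i; rewrite eq_sym => /negbTE ->.
Qed.

Definition types_of_words (W : {ffun TVert d m -> word}) : {ffun lift -> 'I_D} :=
  [ffun a => W a.1 a.2].

Lemma types_of_words_inj : injective types_of_words.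
Proof.
move=> W W' E; apply/ffunP => x; apply/ffunP => l.
by have := congr1 (fun T : {ffun lift -> 'I_D} => T (x, l)) E; rewrite !ffunE.
Qed.

(* The number of edges of type i reaching y is the number of i's in the word at
   the unique white vertex x with tshift f i x = y; summing over i gives N. *)
Lemma balanced_types_of_words (c : {ffun 'I_D -> 'I_N.+1})
    (W : {ffun TVert d m -> word}) :
  (forall x, profile (W x) = c) -> balanced f (types_of_words W).
Proof.
move=> Wc y; rewrite card_set_sum_nat.
have split_type (a : lift) : (tshift f (types_of_words W a) a.1 == y : nat) =
    (\sum_i ((W a.1 a.2 == i) * (tshift f i a.1 == y)))%N.
  rewrite (bigD1 (W a.1 a.2)) //= eqxx ffunE big1 ?addn0 ?mul1n // => i.
  by rewrite eq_sym => /negbTE ->.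
under eq_bigr do rewrite split_type.
rewrite exchange_big /= -[RHS](sum_card_letters (W y)); apply: eq_bigr => i _.
rewrite -(pair_big predT predT (fun x l => (W x l == i) * (tshift f i x == y)))%N /=.
under eq_bigr do rewrite -big_distrl /= -card_set_sum_nat
  (profile_card i (etrans (Wc _) (esym (Wc y)))).
by rewrite -big_distrr /= sum_tshift_eq muln1.
Qed.

End Profiles.

Section PartitionFunction.
Variables (R : realType) (d D m N : nat) (f : 'I_D -> 'I_d -> int) (u : 'I_D -> R).
Hypothesis u_ge0 : forall i, 0 <= u i.
Local Notation lift := (TVert d m * 'I_N)%type.
Local Notation matching := (Matching d D m N).
Local Notation V := #|TVert d m|.
Local Notation card_types T :=
  #|[set M : matching | perfect f M & edge_types M == T]|.

Lemma partition_fn_by_types : partition_fn f u m N =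
  \sum_(T : {ffun lift -> 'I_D}) (\prod_a u (T a)) * (card_types T)%:R.
Proof.
rewrite /partition_fn (partition_big (@edge_types d D m N) xpredT) //=.
apply: eq_bigr => T _.
rewrite (eq_bigr (fun _ => \prod_a u (T a))); last first.
  by move=> M /andP [_ /eqP <-]; apply: eq_bigr => a _; rewrite ffunE.
rewrite (eq_bigl (fun M => M \in [set M : matching | perfect f M & edge_types M == T])).
  by rewrite sumr_const mulr_natr.
by move=> M; rewrite inE.
Qed.

Lemma type_weight_ge0 (T : {ffun lift -> 'I_D}) : 0 <= \prod_a u (T a).
Proof. exact: prodr_ge0. Qed.

Lemma partition_fn_le :
  partition_fn f u m N <= (N`! ^ V)%:R * (\sum_i u i) ^+ (V * N).
Proof.
rewrite partition_fn_by_types.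
apply: (le_trans (y := \sum_(T : {ffun lift -> 'I_D}) (\prod_a u (T a)) * (N`! ^ V)%:R)).
  apply: ler_sum => T _; rewrite ler_wpM2l ?type_weight_ge0 // ler_nat.
  exact: card_perfect_types_le.
rewrite -big_distrl /= mulrC -(bigA_distr_bigA (fun (a : lift) (i : 'I_D) => u i)) /=.
by rewrite prodr_const card_prod card_ord.
Qed.

Definition profile_weight (c : {ffun 'I_D -> 'I_N.+1}) : R :=
  \sum_(tau : {ffun 'I_N -> 'I_D} | profile tau == c) \prod_l u (tau l).

(* Restrict to type assignments whose words all have profile c: these are
   balanced, so each carries at least N!^V perfect matchings. *)
Lemma partition_fn_ge_profile c :
  (N`! ^ V)%:R * profile_weight c ^+ V <= partition_fn f u m N.
Proof.
pose words := [set W : {ffun TVert d m -> {ffun 'I_N -> 'I_D}} |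
                 [forall x, profile (W x) == c]].
pose good := [set types_of_words W | W in words].
rewrite partition_fn_by_types.
apply: (le_trans (y := \sum_(T in good) (\prod_a u (T a)) * (card_types T)%:R));
  last first.
  rewrite [leRHS](bigID (mem good)) /= lerDl.
  by apply: sumr_ge0 => T _; rewrite mulr_ge0 ?type_weight_ge0.
apply: (le_trans (y := \sum_(T in good) (\prod_a u (T a)) * (N`! ^ V)%:R)); last first.
  apply: ler_sum => T /imsetP [W]; rewrite inE => /forallP Wc ->.
  rewrite ler_wpM2l ?type_weight_ge0 // ler_nat card_perfect_types_ge //.
  exact: balanced_types_of_words (fun x => eqP (Wc x)).
rewrite -big_distrl /= [leRHS]mulrC ler_wpM2l // big_imset /=; last first.
  by move=> W1 W2 _ _; apply: types_of_words_inj.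
have -> : profile_weight c ^+ V = \sum_(W in words) \prod_x \prod_l u (W x l).
  rewrite /profile_weight -prodr_const (bigA_distr_big_dep
    (fun _ tau => profile tau == c) (fun (_ : TVert d m) tau => \prod_l u (tau l))).
  by apply: eq_bigl => W; rewrite [RHS]inE; apply/familyP/forallP => H x; exact: H.
rewrite le_eqVlt; apply/orP; left; apply/eqP; apply: eq_bigr => W _.
rewrite (eq_bigr (fun a => u (W a.1 a.2))); last by move=> a _; rewrite ffunE.
by rewrite pair_big.
Qed.

(* The (N+1)^D profiles share the total weight (sum_i u i)^N. *)
Lemma exists_heavy_profile :
  exists c, (\sum_i u i) ^+ N / ((N.+1) ^ D)%:R <= profile_weight c.
Proof.
have [c _ c_max] := @arg_maxP _ R _ [ffun => ord0] xpredT profile_weight isT.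
exists c; rewrite ler_pdivrMr ?ltr0n ?expn_gt0 //.
have -> : (\sum_i u i) ^+ N = \sum_c profile_weight c.
  rewrite -[N in _ ^+ N]card_ord -prodr_const bigA_distr_bigA /=.
  by rewrite (partition_big (@profile D N) xpredT).
apply: (le_trans (y := \sum_(c' : {ffun 'I_D -> 'I_N.+1}) profile_weight c)).
  by apply: ler_sum => c' _; apply: c_max.
by rewrite sumr_const card_ffun !card_ord mulr_natr.
Qed.

Lemma partition_fn_ge :
  (N`! ^ V)%:R * ((\sum_i u i) ^+ N / ((N.+1) ^ D)%:R) ^+ V
    <= partition_fn f u m N.
Proof.
have [c heavy] := exists_heavy_profile.
apply: le_trans (partition_fn_ge_profile c).
rewrite ler_wpM2l // lerXn2r // nnegrE.
  by rewrite divr_ge0 // exprn_ge0 // sumr_ge0.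
by apply: sumr_ge0 => tau _; apply: prodr_ge0.
Qed.

End PartitionFunction.

Section RealInequalities.
Variable R : realType.

Lemma expR_mean_le (I : finType) (P : pred I) (mu x : I -> R) :
  (forall i, P i -> 0 <= mu i) -> \sum_(i | P i) mu i = 1 ->
  expR (\sum_(i | P i) mu i * x i) <= \sum_(i | P i) mu i * expR (x i).
Proof.
move=> mu_ge0 mu_sum1; set E := \sum_(i | P i) mu i * x i.
(* tangent line of expR at E *)
have tangent i : P i -> mu i * (expR E * (1 + (x i - E))) <= mu i * expR (x i).
  move=> Pi; rewrite ler_wpM2l ?mu_ge0 //.
  have -> : expR (x i) = expR E * expR (x i - E) by rewrite -expRD addrC subrK.
  by rewrite ler_wpM2l ?expR_ge0 ?expR_ge1Dx.
apply: le_trans (ler_sum _ tangent).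
rewrite (eq_bigr (fun i => expR E * mu i + expR E * (mu i * x i) - expR E * E * mu i));
  last by move=> i _; ring.
by rewrite sumrB big_split /= -!big_distrr /= mu_sum1 -/E !mulr1 addrK.
Qed.

Lemma ln_le_subr1 (y : R) : 0 < y -> ln y <= y - 1.
Proof. by move=> y0; have := @le_ln1Dx R (y - 1); rewrite subrKC; apply; lra. Qed.

Lemma expR_le_quadratic (x : R) : x <= 2^-1 -> expR x <= 1 + x + 2 * x ^+ 2.
Proof.
move=> x_le.
have lower : expR x * (1 - x) <= 1.
  have := expR_ge1Dx (- x).
  by rewrite expRN -(ler_pM2l (expR_gt0 x)) mulfV ?gt_eqF ?expR_gt0.
have upper : 1 <= (1 + x + 2 * x ^+ 2) * (1 - x) by nra.
have pos : 0 < 1 - x by lra.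
by rewrite -(ler_pM2r pos) (le_trans lower upper).
Qed.

(* The difference quotients of phi at 1 +- h bracket e; replacing phi by g
   costs delta / h. *)
Lemma convex_sandwich (phi g : R -> R) (e A Q delta h : R) :
  0 < h -> h <= 1 -> 0 <= delta ->
  (forall s, g s - delta <= phi s <= g s) ->
  (forall t, t * e <= phi (1 + t) - phi 1) ->
  g (1 + h) - g 1 <= h * A + 2 * h ^+ 2 * Q ->
  g (1 - h) - g 1 <= - h * A + 2 * h ^+ 2 * Q ->
  `|(g 1 - A) - (phi 1 - e)| <= 2 * h * Q + 2 * (delta / h).
Proof.
move=> h_gt0 h_le1 delta_ge0 bounds slope g_up g_down.
set c := delta / h.
have c_ge0 : 0 <= c by apply: divr_ge0 => //; apply: ltW.
have hc_ge0 : 0 <= h * c by apply: mulr_ge0 => //; apply: ltW.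
have hhc_ge0 : 0 <= h * h * c by apply: mulr_ge0 => //; apply: mulr_ge0; apply: ltW.
have delta_hc : delta = h * c by rewrite /c mulrC divfK ?gt_eqF.
have /andP [lo1 up1] := bounds 1.
have /andP [_ up_p] := bounds (1 + h); have /andP [_ up_m] := bounds (1 - h).
have slope_p := slope h; have slope_m := slope (- h).
have lo1_m : (1 - h) * (g 1 - delta) <= (1 - h) * phi 1 by rewrite ler_wpM2l //; lra.
have lo1_p : (1 + h) * (g 1 - delta) <= (1 + h) * phi 1 by rewrite ler_wpM2l //; lra.
rewrite delta_hc in lo1_m lo1_p.
rewrite ler_norml; apply/andP; split; rewrite -(ler_pM2l h_gt0); nra.
Qed.

End RealInequalities.

Section Entropy.
Variables (R : realType) (d D m N : nat) (f : 'I_D -> 'I_d -> int) (w : 'I_D -> R).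
Hypothesis w_gt0 : forall i, 0 < w i.
Hypothesis D_gt0 : (0 < D)%N.
Local Notation matching := (Matching d D m N).
Local Notation V := #|TVert d m|.

Definition tilt (s : R) (i : 'I_D) : R := expR (s * ln (w i)).
Definition log_weight (M : matching) : R := \sum_a ln (w (M a).1).
Definition tilted_Z (s : R) : R := partition_fn f (tilt s) m N.
Definition mean_log_weight : R :=
  \sum_(M : matching | perfect f M) boltzmann f w M * log_weight M.

Lemma tilt1 i : tilt 1 i = w i.
Proof. by rewrite /tilt mul1r lnK // posrE. Qed.

Lemma mweight_tilt s M : mweight (tilt s) M = expR (s * log_weight M).
Proof. by rewrite /log_weight mulr_sumr expR_sum. Qed.

Lemma tilted_ZE s :
  tilted_Z s = \sum_(M : matching | perfect f M) expR (s * log_weight M).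
Proof. by apply: eq_bigr => M _; rewrite mweight_tilt. Qed.

Lemma sum_tilt_gt0 s : 0 < \sum_i tilt s i.
Proof.
rewrite (bigD1 (Ordinal D_gt0)) //= ltr_wpDr ?expR_gt0 //.
by apply: sumr_ge0 => i _; apply: expR_ge0.
Qed.

Lemma tilted_Z_gt0 s : 0 < tilted_Z s.
Proof.
apply: lt_le_trans (partition_fn_ge _ _ _ _) => [|i]; last exact: expR_ge0.
by rewrite mulr_gt0 ?exprn_gt0 ?divr_gt0 ?exprn_gt0 ?sum_tilt_gt0 ?ltr0n
  ?expn_gt0 ?fact_gt0.
Qed.

Lemma boltzmann_tilt M : boltzmann f w M = expR (log_weight M) / tilted_Z 1.
Proof.
rewrite /boltzmann /tilted_Z -[log_weight M]mul1r -mweight_tilt.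
by have -> : tilt 1 = w by apply/funext => i; rewrite tilt1.
Qed.

Lemma sum_boltzmann : \sum_(M : matching | perfect f M) boltzmann f w M = 1.
Proof.
under eq_bigr do rewrite boltzmann_tilt.
rewrite -mulr_suml [X in X / _](_ : _ = tilted_Z 1) ?divff ?gt_eqF ?tilted_Z_gt0 //.
by rewrite tilted_ZE; apply: eq_bigr => M _; rewrite mul1r.
Qed.

Lemma entropy_mean_log_weight :
  entropy f w m N = ln (tilted_Z 1) - mean_log_weight.
Proof.
rewrite /entropy /mean_log_weight -[ln _]mulr1 -[X in _ * X]sum_boltzmann.
rewrite mulr_sumr -sumrB.
rewrite -sumrN; apply: eq_bigr => M _; rewrite [in ln _]boltzmann_tilt.
by rewrite ln_div ?posrE ?expR_gt0 ?tilted_Z_gt0 // expRK; ring.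
Qed.

(* Convexity of s |-> ln (tilted_Z s), whose derivative at 1 is the mean. *)
Lemma mean_log_weight_le t :
  t * mean_log_weight <= ln (tilted_Z (1 + t)) - ln (tilted_Z 1).
Proof.
have Z1_gt0 := tilted_Z_gt0 1.
have mu_ge0 (M : matching) : perfect f M -> 0 <= boltzmann f w M.
  by move=> _; rewrite boltzmann_tilt divr_ge0 ?expR_ge0 ?ltW.
have jensen := expR_mean_le (fun M => t * log_weight M) mu_ge0 sum_boltzmann.
rewrite -ln_div ?posrE ?tilted_Z_gt0 // -ler_expR lnK ?posrE ?divr_gt0 ?tilted_Z_gt0 //.
have -> : t * mean_log_weight =
    \sum_(M : matching | perfect f M) boltzmann f w M * (t * log_weight M).
  by rewrite mulr_sumr; apply: eq_bigr => M _; ring.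
apply: (le_trans jensen); rewrite le_eqVlt; apply/orP; left; apply/eqP.
rewrite tilted_ZE mulr_suml; apply: eq_bigr => M _.
by rewrite boltzmann_tilt mulrDl mul1r expRD; field; rewrite gt_eqF.
Qed.

Definition log_sum_tilt (s : R) : R := ln (\sum_i tilt s i).

Definition free_energy (s : R) : R :=
  (ln (tilted_Z s) - V%:R * ln (N`!)%:R) / (N * V)%:R.

Lemma card_TVert : V = (m.+1 ^ d)%N.
Proof. by rewrite card_ffun !card_ord. Qed.

Lemma normalized_entropy_free_energy :
  normalized_entropy f w m N = free_energy 1 - mean_log_weight / (N * V)%:R.
Proof.
rewrite /normalized_entropy /free_energy entropy_mean_log_weight card_TVert -mulrBl.
by congr (_ * _); rewrite addrAC.
Qed.

Lemma free_energy_convex t :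
  t * (mean_log_weight / (N * V)%:R) <= free_energy (1 + t) - free_energy 1.
Proof.
rewrite /free_energy mulrA -mulrBl; apply: ler_wpM2r; first by rewrite invr_ge0.
by rewrite opprB addrA subrK mean_log_weight_le.
Qed.

Section LargeN.
Hypothesis N_gt0 : (0 < N)%N.

Lemma NV_gt0 : 0 < (N * V)%:R :> R.
Proof. by rewrite ltr0n muln_gt0 N_gt0 card_TVert expn_gt0. Qed.

Lemma free_energy_le s : free_energy s <= log_sum_tilt s.
Proof.
have sum_gt0 := sum_tilt_gt0 s.
rewrite /free_energy ler_pdivrMr ?NV_gt0 // lerBlDl.
have : ln (tilted_Z s) <= ln ((N`! ^ V)%:R * (\sum_i tilt s i) ^+ (V * N)).
  by rewrite ler_ln ?posrE ?tilted_Z_gt0 ?mulr_gt0 ?exprn_gt0 ?ltr0n ?expn_gt0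
    ?fact_gt0 // partition_fn_le // => i; apply: expR_ge0.
rewrite lnM ?posrE ?exprn_gt0 ?ltr0n ?expn_gt0 ?fact_gt0 //.
rewrite natrX lnXn ?ltr0n ?fact_gt0 //.
by rewrite lnXn // -/(log_sum_tilt s) mulr_natl mulr_natr mulnC.
Qed.

Lemma free_energy_ge s :
  log_sum_tilt s - D%:R * ln (N.+1)%:R / N%:R <= free_energy s.
Proof.
have sum_gt0 := sum_tilt_gt0 s.
have fact_pos : 0 < (N`!%:R : R) by rewrite ltr0n fact_gt0.
have succ_pos : 0 < (N.+1%:R : R) by rewrite ltr0n.
have ratio_gt0 : 0 < (\sum_i tilt s i) ^+ N / (N.+1 ^ D)%:R.
  by rewrite natrX divr_gt0 // exprn_gt0.
have factV_gt0 : 0 < ((N`! ^ V)%:R : R) by rewrite natrX exprn_gt0.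
have ratioV_gt0 := exprn_gt0 V ratio_gt0.
have lnZ_ge : ln ((N`! ^ V)%:R * ((\sum_i tilt s i) ^+ N / (N.+1 ^ D)%:R) ^+ V)
    <= ln (tilted_Z s).
  rewrite ler_ln ?posrE ?tilted_Z_gt0 ?mulr_gt0 //.
  by apply: partition_fn_ge => i; apply: expR_ge0.
rewrite lnM ?posrE // (lnXn _ ratio_gt0) ln_div ?posrE ?exprn_gt0 // in lnZ_ge.
rewrite (lnXn _ sum_gt0) -/(log_sum_tilt s) !natrX in lnZ_ge.
rewrite (lnXn _ fact_pos) (lnXn _ succ_pos) in lnZ_ge.
rewrite /free_energy ler_pdivlMr ?NV_gt0 // natrM mulrA mulrBl divfK ?gt_eqF ?ltr0n //.
by rewrite lerBrDl mulr_natl mulr_natr (mulr_natr (log_sum_tilt s)) mulr_natl.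
Qed.

End LargeN.

Definition wsum : R := \sum_i w i.
Definition wmean_ln : R := \sum_i (w i / wsum) * ln (w i).
Definition wmean_ln2 : R := \sum_i (w i / wsum) * ln (w i) ^+ 2.

Lemma wmean_lnE : wmean_ln = wsum^-1 * \sum_i w i * ln (w i).
Proof.
rewrite /wmean_ln mulr_sumr; apply: eq_bigr => i _.
by rewrite [RHS]mulrA [wsum^-1 * _]mulrC.
Qed.

Lemma wsum_gt0 : 0 < wsum.
Proof.
rewrite /wsum (bigD1 (Ordinal D_gt0)) //= ltr_wpDr ?w_gt0 //.
by apply: sumr_ge0 => i _; apply: ltW.
Qed.

Lemma wmean_ln2_ge0 : 0 <= wmean_ln2.
Proof.
apply: sumr_ge0 => i _; rewrite mulr_ge0 ?sqr_ge0 //.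
by rewrite divr_ge0 ?ltW ?w_gt0 ?wsum_gt0.
Qed.

Lemma log_sum_tilt1 : log_sum_tilt 1 = ln wsum.
Proof.
by rewrite /log_sum_tilt /wsum; congr ln; apply: eq_bigr => i _; rewrite tilt1.
Qed.

Lemma log_sum_tilt_step t : (forall i, t * ln (w i) <= 2^-1) ->
  log_sum_tilt (1 + t) - log_sum_tilt 1 <= t * wmean_ln + 2 * t ^+ 2 * wmean_ln2.
Proof.
move=> small.
have W_gt0 := wsum_gt0.
rewrite log_sum_tilt1 /log_sum_tilt -ln_div ?posrE ?sum_tilt_gt0 //.
apply: le_trans (ln_le_subr1 (divr_gt0 (sum_tilt_gt0 _) W_gt0)) _.
have probs : \sum_i w i / wsum = 1 by rewrite -mulr_suml divff ?gt_eqF.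
have -> : (\sum_i tilt (1 + t) i) / wsum - 1 =
    \sum_i (w i / wsum) * (expR (t * ln (w i)) - 1).
  rewrite -[X in _ - X]probs mulr_suml -sumrB; apply: eq_bigr => i _.
  by rewrite /tilt mulrDl mul1r expRD lnK ?posrE //; ring.
have -> : t * wmean_ln + 2 * t ^+ 2 * wmean_ln2 =
    \sum_i (w i / wsum) * (t * ln (w i) + 2 * (t * ln (w i)) ^+ 2).
  rewrite /wmean_ln /wmean_ln2 !mulr_sumr -big_split /=.
  by apply: eq_bigr => i _; ring.
apply: ler_sum => i _; apply: ler_wpM2l; first by rewrite divr_ge0 ?ltW.
by have := expR_le_quadratic (small i); lra.
Qed.

Lemma normalized_entropy_close h : 0 < h -> h <= 1 ->
  (forall i, h * `|ln (w i)| <= 2^-1) -> (0 < N)%N ->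
  `|(ln wsum - wmean_ln) - normalized_entropy f w m N|
    <= 2 * h * wmean_ln2 + 2 * (D%:R * ln (N.+1)%:R / N%:R / h).
Proof.
move=> h_gt0 h_le1 small N_gt0.
have small_p i : h * ln (w i) <= 2^-1.
  by apply: le_trans (small i); apply: ler_wpM2l; [exact: ltW | exact: ler_norm].
have small_m i : - h * ln (w i) <= 2^-1.
  apply: le_trans (small i); rewrite mulNr -mulrN.
  by apply: ler_wpM2l; [exact: ltW | rewrite -normrN ler_norm].
rewrite normalized_entropy_free_energy -log_sum_tilt1.
apply: convex_sandwich => //.
- rewrite divr_ge0 ?mulr_ge0 //; apply: ln_ge0; by rewrite ler1n.
- by move=> s; rewrite free_energy_le ?free_energy_ge.
- exact: free_energy_convex.
- exact: log_sum_tilt_step.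
- by have := log_sum_tilt_step small_m; rewrite sqrrN.
Qed.

End Entropy.

Local Open Scope classical_set_scope.
Section Limit.
Variable R : realType.

Lemma ln_succ_sqr_le (N : nat) : ln (N.+1%:R : R) ^+ 2 <= 2 * N%:R.
Proof.
have ln_ge0 : 0 <= ln (N.+1%:R : R) by rewrite ln_ge0 // ler1n.
have := expR_ge1Dxn 1 ln_ge0; rewrite lnK ?posrE ?ltr0n // -addn1 natrD.
have -> : ((1.+1)`!%:R : R) = 2 by [].
lra.
Qed.

Lemma ln_succ_div_cvg0 : (fun N : nat => ln (N.+1%:R : R) / N%:R) @ \oo --> 0.
Proof.
apply/cvgr0Pnorm_le => e e_gt0.
apply: filterS2 (nbhs_infty_ger (2 / e ^+ 2)) (nbhs_infty_gt 0) => N N_ge N_gt0.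
have N_pos : 0 < (N%:R : R) by rewrite ltr0n.
have ln_ge0 : 0 <= ln (N.+1%:R : R) by rewrite ln_ge0 // ler1n.
rewrite ger0_norm ?divr_ge0 ?ler0n // ler_pdivrMr //.
suff : ln (N.+1%:R : R) ^+ 2 <= (e * N%:R) ^+ 2.
  by rewrite ler_sqr // nnegrE mulr_ge0 ?ltW.
apply: le_trans (ln_succ_sqr_le N) _.
rewrite ler_pdivrMr ?exprn_gt0 // in N_ge.
by rewrite exprMn; nra.
Qed.

Variables (d D : nat) (f : 'I_D -> 'I_d -> int) (w : 'I_D -> R).
Hypothesis w_gt0 : forall i, 0 < w i.
Hypothesis D_gt0 : (0 < D)%N.

Lemma exists_small_tilt e : 0 < e -> exists h,
  [/\ 0 < h, h <= 1, forall i, h * `|ln (w i)| <= 2^-1 & 2 * h * wmean_ln2 w <= e / 2].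
Proof.
move=> e_gt0.
have Q_ge0 := wmean_ln2_ge0 w_gt0 D_gt0.
pose B := 1 + \sum_i `|ln (w i)|.
have lnw_le i : `|ln (w i)| <= B.
  rewrite /B (bigD1 i) //=.
  have : 0 <= \sum_(j | j != i) `|ln (w j)| by apply: sumr_ge0.
  lra.
have B_ge1 : 1 <= B by rewrite lerDl sumr_ge0.
pose h := Num.min (2^-1 / B) (e / (4 * (wmean_ln2 w + 1))).
have hB : h <= 2^-1 / B by rewrite /h ge_min lexx.
have hQ : h <= e / (4 * (wmean_ln2 w + 1)) by rewrite /h ge_min lexx orbT.
exists h.
rewrite ler_pdivlMr in hB; last lra.
rewrite ler_pdivlMr in hQ; last lra.
have h_gt0 : 0 < h by rewrite lt_min !divr_gt0 //; lra.
split => // [|i|]; first nra.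
  by have := lnw_le i; have := normr_ge0 (ln (w i)); nra.
nra.
Qed.

Lemma normalized_entropy_cvg m :
  (fun N => normalized_entropy f w m N) @ \oo --> ln (wsum w) - wmean_ln w.
Proof.
apply/cvgrPdist_le => e e_gt0.
have [h [h_gt0 h_le1 small hQ]] := exists_small_tilt e_gt0.
have D_pos : 0 < (D%:R : R) by rewrite ltr0n.
have c_gt0 : 0 < e * h / (4 * D%:R) by rewrite !divr_gt0 ?mulr_gt0.
move/cvgr0Pnorm_le: ln_succ_div_cvg0 => /(_ _ c_gt0) ln_small.
apply: filterS2 ln_small (nbhs_infty_gt 0) => N ln_le N_gt0.
apply: le_trans (normalized_entropy_close m f w_gt0 D_gt0 h_gt0 h_le1 small N_gt0) _.
have : D%:R * ln (N.+1)%:R / N%:R / h <= e / 4.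
  rewrite ler_pdivrMr // -mulrA.
  apply: le_trans (ler_wpM2l (ltW D_pos) (le_trans (ler_norm _) ln_le)) _.
  by rewrite le_eqVlt; apply/orP; left; apply/eqP; field; rewrite gt_eqF.
lra.
Qed.

End Limit.

Lemma Lconnected_D_gt0 (d D : nat) (f : 'I_D -> 'I_d -> int) :
  Lconnected f -> (0 < D)%N.
Proof.
move=> /(_ (true, [ffun => 0]) (false, [ffun => 0])) reach.
inversion reach as [| u v x [i _] _].
exact: leq_ltn_trans (leq0n i) (ltn_ord i).
Qed.

Theorem mainTheorem2 (R : realType) (d D : nat) (v0 : 'I_d -> R)
    (f : 'I_D -> 'I_d -> int) (w : 'I_D -> R) :
  spans_Rd (evec v0 f) ->
  sum_zero (evec v0 f) ->
  Lconnected f ->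
  (forall i, 0 < w i) ->
  exists L : nat -> R,
    (forall m : nat, (fun N => normalized_entropy f w m N) @ \oo --> L m) /\
    (L @ \oo --> ln (\sum_(i < D) w i)
                 - (\sum_(i < D) w i)^-1 * \sum_(i < D) w i * ln (w i)).
Proof.
move=> _ _ /Lconnected_D_gt0 D_gt0 w_gt0.
exists (fun _ => ln (wsum w) - wmean_ln w); split.
  by move=> m; apply: normalized_entropy_cvg.
by rewrite wmean_lnE; apply: cvg_cst.
Qed.
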